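(* Let $U=U_1\times\cdots\times U_m\subset\mathbb{R}^m_+$ be a convex set with each $U_i\subseteq\mathbb{R}$, let $C\subseteq\mathbb{R}^m$ be a set and $\overline{U}=U\cap C$. Let $c\in\mathbb{R}^{n_1}$, $d\in\mathbb{R}^{n_2}$, $a_i\in\mathbb{R}^{n_1}$, $g_i\in\mathbb{R}^{n_2}$ ($i\in[m]$). For a set $S\subseteq\mathbb{R}^m$ define the adaptive robust value $$z(S)=\inf_{x\in\mathbb{R}^{n_1},\ y:S\to\mathbb{R}^{n_2}}\Big\{c^Tx+\sup_{u\in S}d^Ty(u):\ a_i^Tx+g_i^Ty(u)\ge u_i\ \ \forall u\in S,\ \forall i\in[m]\Big\},$$ and let $z_{\rm aro}=z(U)$, $z_{\rm acp}=z(\overline{U})$. Let $\rho_{\rm aro}=\rho(U^\downarrow,\overline{U}^\downarrow)$ and $\gamma_{\rm aro}=\gamma(U^\downarrow,\overline{U}^\downarrow)$. If $0<z_{\rm acp}\le z_{\rm aro}<\infty$, then $$\rho_{\rm aro}\le\frac{z_{\rm acp}}{z_{\rm aro}}\le\gamma_{\rm aro}.$$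
   Context: $[m]=\{1,\dots,m\}$. For $S\subseteq\mathbb{R}^m_+$, $S^\downarrow=\{t\in\mathbb{R}^m_+:\exists s\in S,\ t\le s\text{ componentwise}\}$. For $r\ge0$, $rS=\{rx:x\in S\}$. For sets $S_1,S_2$: $\rho(S_1,S_2)=\max\{\rho\ge 0:\rho S_1\subseteq S_2\}$ and $\gamma(S_1,S_2)=\min\{\gamma\ge0: S_2\subseteq \gamma S_1\}$. The second-stage decision $y$ ranges over arbitrary functions of the uncertainty. *)

From mathcomp Require Import all_boot all_order all_algebra.
From mathcomp Require Import all_classical all_reals.
From mathcomp Require Import ereal.
Set Implicit Arguments. Unset Strict Implicit. Unset Printing Implicit Defensive.
Import Order.TTheory GRing.Theory Num.Theory.
Local Open Scope classical_set_scope.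
Local Open Scope ring_scope.

Section Defs.
Variable R : realType.

Definition dotp (n : nat) (x y : 'I_n -> R) : R := \sum_(i < n) x i * y i.

Definition nonneg_orthant (m : nat) : set ('I_m -> R) :=
  [set u | forall i, 0 <= u i].

Definition vle (m : nat) (t s : 'I_m -> R) : Prop := forall i, t i <= s i.

Definition down_clos (m : nat) (S : set ('I_m -> R)) : set ('I_m -> R) :=
  [set t | nonneg_orthant t /\ exists2 s, S s & vle t s].

Definition scale_set (m : nat) (r : R) (S : set ('I_m -> R)) : set ('I_m -> R) :=
  [set (fun i => r * x i) | x in S].

(* rho(S1,S2) = max{rho >= 0 : rho S1 <= S2}, taken as a supremum in \bar R *)
Definition rho_fac (m : nat) (S1 S2 : set ('I_m -> R)) : \bar R :=
  ereal_sup [set r%:E | r in [set r : R | 0 <= r /\ scale_set r S1 `<=` S2]].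

(* gamma(S1,S2) = min{gamma >= 0 : S2 <= gamma S1}, taken as an infimum in \bar R *)
Definition gamma_fac (m : nat) (S1 S2 : set ('I_m -> R)) : \bar R :=
  ereal_inf [set g%:E | g in [set g : R | 0 <= g /\ S2 `<=` scale_set g S1]].

Definition is_product_set (m : nat) (U : set ('I_m -> R)) : Prop :=
  exists Ui : 'I_m -> set R, U = [set u | forall i, Ui i (u i)].

Definition convex_setR (m : nat) (U : set ('I_m -> R)) : Prop :=
  forall u v, U u -> U v -> forall t : R, 0 <= t -> t <= 1 ->
    U (fun i => t * u i + (1 - t) * v i).

(* adaptive robust value z(S); the second-stage policy y is an arbitrary
   function of the uncertainty (only its values on S matter). *)
Definition zval (m n1 n2 : nat) (c : 'I_n1 -> R) (d : 'I_n2 -> R)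
  (a : 'I_m -> 'I_n1 -> R) (g : 'I_m -> 'I_n2 -> R) (S : set ('I_m -> R)) : \bar R :=
  ereal_inf [set ((dotp c xy.1)%:E + ereal_sup [set (dotp d (xy.2 u))%:E | u in S])%E
            | xy in [set xy : ('I_n1 -> R) * (('I_m -> R) -> ('I_n2 -> R)) |
                      forall u, S u -> forall i,
                        u i <= dotp (a i) xy.1 + dotp (g i) (xy.2 u)]].
End Defs.

From mathcomp Require Import all_boot all_order all_algebra.
From mathcomp Require Import all_classical all_reals.
From mathcomp Require Import ereal.
Import Order.TTheory GRing.Theory Num.Theory.
Local Open Scope classical_set_scope.
Local Open Scope ring_scope.

(* If [k S] is dominated componentwise by points of [T], choose a dominating
   map [f]; any policy [(x, y)] feasible on [T] gives the policy
   [(x / k, fun u => y (f u) / k)] feasible on [S], of cost [1/k] times that of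
   [(x, y)].  Hence [k z(S) <= z(T)].  Taking [k = rho] for [(U, Ubar)] and
   [k = 1/gamma] for [(Ubar, U)] gives both bounds. *)

Lemma dotpZr {R : realType} n (v w : 'I_n -> R) (t : R) :
  dotp v (fun j => t * w j) = t * dotp v w.
Proof. by rewrite /dotp mulr_sumr; apply: eq_bigr => j _; rewrite mulrCA. Qed.

Lemma dotp0r {R : realType} n (v : 'I_n -> R) : dotp v (fun _ => 0) = 0.
Proof. by rewrite /dotp big1 // => j _; rewrite mulr0. Qed.

Section AdaptiveRobustValue.
Context {R : realType} {m n1 n2 : nat}.
Variables (c : 'I_n1 -> R) (d : 'I_n2 -> R).
Variables (a : 'I_m -> 'I_n1 -> R) (g : 'I_m -> 'I_n2 -> R).

Lemma zval_le_cost {S : set ('I_m -> R)} (x : 'I_n1 -> R)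
    (y : ('I_m -> R) -> 'I_n2 -> R) :
  (forall u, S u -> forall i, u i <= dotp (a i) x + dotp (g i) (y u)) ->
  (zval c d a g S <= (dotp c x)%:E + ereal_sup [set (dotp d (y u))%:E | u in S])%E.
Proof. by move=> feas; apply: ereal_inf_lbound; exists (x, y). Qed.

Lemma zval_le0 (S : set ('I_m -> R)) :
  (forall u, S u -> forall i, u i <= 0) -> (zval c d a g S <= 0)%E.
Proof.
move=> Sle0; apply: (le_trans (zval_le_cost (fun _ => 0) (fun _ _ => 0) _)).
  by move=> u Su i; rewrite !dotp0r addr0; exact: Sle0.
rewrite dotp0r add0e; apply: ge_ereal_sup => _ [u _ <-].
by rewrite dotp0r.
Qed.

Lemma zval_scale_le {S T : set ('I_m -> R)} {k : R} :
  0 < k -> scale_set k S `<=` down_clos T ->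
  (k%:E * zval c d a g S <= zval c d a g T)%E.
Proof.
move=> k_gt0 kST.
have kV_ge0 : 0 <= k^-1 by rewrite invr_ge0 ltW.
have dominating u : exists s, S u -> T s /\ vle (fun i => k * u i) s.
  have [Su|] := pselect (S u); last by exists u.
  by have [_ [s Ts ks]] := kST _ (ex_intro2 _ _ u Su erefl); exists s.
have [f dom] := choice dominating.
apply: le_ereal_inf_tmp => _ [[x y] /= feas <-].
rewrite -lee_pdivlMl // muleDr // -EFinM -dotpZr.
apply: le_trans (zval_le_cost (fun j => k^-1 * x j)
                  (fun u j => k^-1 * y (f u) j) _) _.
  move=> u Su i; rewrite !dotpZr -mulrDr -[u i](mulKf (lt0r_neq0 k_gt0)).
  apply: ler_wpM2l => //; have [Tfu kuf] := dom u Su.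
  exact: le_trans (kuf i) (feas _ Tfu i).
apply: leeD2l; apply: ge_ereal_sup => _ [u Su <-].
rewrite dotpZr EFinM; apply: lee_wpmul2l; first by rewrite lee_fin.
by apply: ereal_sup_ubound; exists (f u) => //; case: (dom u Su).
Qed.

End AdaptiveRobustValue.

Lemma gt0_ltey_EFin {R : realType} {x : \bar R} :
  (0 < x)%E -> (x < +oo)%E -> exists2 r : R, 0 < r & x = r%:E.
Proof. by case: x => // r; exists r. Qed.

Section ScaledDownwardClosures.
Context {R : realType} {m : nat}.
Implicit Types (S T : set ('I_m -> R)) (r : R).

Lemma sub_down_clos {S} : S `<=` @nonneg_orthant R m -> S `<=` down_clos S.
Proof. by move=> S_ge0 u Su; split; [exact: S_ge0 | exists u]. Qed.

Lemma scale_setS r {S T} : S `<=` T -> scale_set r S `<=` scale_set r T.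
Proof. by move=> ST _ [u Su <-]; exists u => //; exact: ST. Qed.

Lemma scale_setV_sub {r S T} :
  r != 0 -> T `<=` scale_set r S -> scale_set r^-1 T `<=` S.
Proof.
move=> r_neq0 TrS _ [u Tu <-]; have [s Ss <-] := TrS u Tu.
suff -> : (fun i => r^-1 * (r * s i)) = s by [].
by apply/funext => i; rewrite mulKf.
Qed.

Lemma scale_set0 S u : scale_set 0 S u -> forall i, u i <= 0.
Proof. by move=> [s _ <-] i; rewrite mul0r. Qed.

End ScaledDownwardClosures.

Section RatioBounds.
Context {R : realType} {m n1 n2 : nat}.
Variables (c : 'I_n1 -> R) (d : 'I_n2 -> R).
Variables (a : 'I_m -> 'I_n1 -> R) (g : 'I_m -> 'I_n2 -> R).
Context {S T : set ('I_m -> R)} {A B : R}.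
Hypotheses (A_gt0 : 0 < A) (B_gt0 : 0 < B).

Lemma rho_fac_le_ratio : S `<=` @nonneg_orthant R m ->
  zval c d a g S = B%:E -> zval c d a g T = A%:E ->
  (rho_fac (down_clos S) (down_clos T) <= (A / B)%:E)%E.
Proof.
move=> S_ge0 zS zT; apply: ge_ereal_sup => _ [r [r_ge0 rST] <-].
rewrite lee_fin ler_pdivlMr //.
have [->|r_neq0] := eqVneq r 0; first by rewrite mul0r ltW.
have r_gt0 : 0 < r by rewrite lt_def r_neq0.
have rSdT : scale_set r S `<=` down_clos T.
  exact: subset_trans (scale_setS r (sub_down_clos S_ge0)) rST.
by rewrite -lee_fin EFinM -zS -zT; exact: zval_scale_le.
Qed.

Lemma gamma_fac_ge_ratio : T `<=` @nonneg_orthant R m ->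
  zval c d a g S = B%:E -> zval c d a g T = A%:E ->
  ((A / B)%:E <= gamma_fac (down_clos S) (down_clos T))%E.
Proof.
move=> T_ge0 zS zT; apply: le_ereal_inf_tmp => _ [r [r_ge0 TrS] <-].
have TdT := sub_down_clos T_ge0.
have [r0|r_neq0] := eqVneq r 0.
  have: (zval c d a g T <= 0)%E.
    rewrite r0 in TrS; apply: zval_le0 => u Tu.
    exact: scale_set0 (TrS _ (TdT _ Tu)).
  by rewrite zT leNgt lte_fin A_gt0.
have r_gt0 : 0 < r by rewrite lt_def r_neq0.
have rVTdS : scale_set r^-1 T `<=` down_clos S.
  exact: subset_trans (scale_setS r^-1 TdT) (scale_setV_sub r_neq0 TrS).
rewrite lee_fin ler_pdivrMr // -lee_fin EFinM -lee_pdivrMl //.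
by rewrite -zS -zT; apply: zval_scale_le rVTdS; rewrite invr_gt0.
Qed.

End RatioBounds.

Theorem theorem2 (R : realType) (m n1 n2 : nat)
  (U C : set ('I_m -> R)) (c : 'I_n1 -> R) (d : 'I_n2 -> R)
  (a : 'I_m -> 'I_n1 -> R) (g : 'I_m -> 'I_n2 -> R) :
  U `<=` @nonneg_orthant R m ->
  is_product_set U ->
  convex_setR U ->
  let Ubar := U `&` C in
  let z_aro := zval c d a g U in
  let z_acp := zval c d a g Ubar in
  (0 < z_acp)%E -> (z_acp <= z_aro)%E -> (z_aro < +oo)%E ->
  (rho_fac (down_clos U) (down_clos Ubar) <= (fine z_acp / fine z_aro)%:E)%E /\
  ((fine z_acp / fine z_aro)%:E <= gamma_fac (down_clos U) (down_clos Ubar))%E.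
Proof.
move=> U_ge0 _ _ Ubar z_aro z_acp acp_gt0 acp_le_aro aro_lt_oo.
have [B B_gt0 aroE] := gt0_ltey_EFin (lt_le_trans acp_gt0 acp_le_aro) aro_lt_oo.
have [A A_gt0 acpE] := gt0_ltey_EFin acp_gt0 (le_lt_trans acp_le_aro aro_lt_oo).
have Ubar_ge0 : Ubar `<=` @nonneg_orthant R m by move=> u [/U_ge0].
rewrite aroE acpE /=; split.
- exact: (rho_fac_le_ratio c d a g A_gt0 B_gt0 U_ge0 aroE acpE).
- exact: (gamma_fac_ge_ratio c d a g A_gt0 B_gt0 Ubar_ge0 aroE acpE).
Qed.
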